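(* For every natural number $n\geq 2$, the $n$-Split Interval $S_n(I)$ is a Rosenthal compactum which is premetric of degree at most $n$ but is not premetric of degree at most $n-1$.
   Context: A Rosenthal compactum is a topological space homeomorphic to a compact subset of $\mathcal{B}_1(\mathbb{N}^{\mathbb{N}})$, the space of first Baire class real functions on $\mathbb{N}^{\mathbb{N}}$ with the pointwise topology. A compact space $K$ is premetric of degree at most $m$ if there is a continuous surjection $f:K\to M$ onto a metrizable compact space $M$ with $|f^{-1}(x)|\leq m$ for all $x\in M$. Let $I=[0,1]$. For $n\geq 2$, $S_n(I)$ is the set $I\times\{0,\ldots,n-1\}$ with the topology in which the points $(x,i)$ with $i\in\{2,\ldots,n-1\}$ are isolated, a point $(x,0)$ with $x>0$ has basic neighbourhoods $\{(x,0)\}\cup\{(y,i): z_0<y<x,\ i\in\{0,\ldots,n-1\}\}$ for $z_0\in I$, $z_0<x$, a point $(x,1)$ with $x<1$ has basic neighbourhoods $\{(x,1)\}\cup\{(y,i): x<y<z_1,\ i\in\{0,\ldots,n-1\}\}$ for $z_1\in I$, $z_1>x$, and the points $(0,0)$ and $(1,1)$ are isolated. *)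

From HB Require Import structures.
From mathcomp Require Import all_boot all_order all_algebra.
From mathcomp Require Import all_classical all_reals all_analysis.
Set Implicit Arguments. Unset Strict Implicit. Unset Printing Implicit Defensive.
Import Order.TTheory GRing.Theory Num.Theory.
Import numFieldTopology.Exports numFieldNormedType.Exports.
Local Open Scope classical_set_scope.
Local Open Scope ring_scope.

Definition unit_itv (R : realType) := {x : R | 0 <= x <= 1}.

Definition Sn (R : realType) (n : nat) : Type := (unit_itv R * 'I_n)%type.
HB.instance Definition _ (R : realType) (n : nat) := Choice.on (Sn R n).

Section SplitInterval.
Variables (R : realType) (n : nat).

Definition sn_basic (p : Sn R n) (B : set (Sn R n)) : Prop :=
  let x := val p.1 in
  let i := nat_of_ord p.2 in
  if (1 < i)%N then B = [set p]
  else if i == 0%N then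
    (x = 0 /\ B = [set p]) \/
    (exists z : R, 0 <= z < x /\
       B = [set p] `|` [set q : Sn R n | z < val q.1 < x])
  else
    (x = 1 /\ B = [set p]) \/
    (exists z : R, x < z <= 1 /\
       B = [set p] `|` [set q : Sn R n | x < val q.1 < z]).

Definition sn_open (U : set (Sn R n)) : Prop :=
  forall p, U p -> exists B, sn_basic p B /\ B `<=` U.

Lemma sn_basic_mem p B : sn_basic p B -> B p.
Proof.
rewrite /sn_basic; case: ifP => _; first by move=> ->.
case: ifP => _ [[_ ->]|[z [_ ->]]] //; by left.
Qed.

Lemma sn_openT : sn_open setT.
Proof.
move=> p _; have /andP[x0 x1] := valP p.1.
have [Hi|Hi] := boolP (1 < p.2)%N.
  by exists [set p]; rewrite /sn_basic /= Hi.
have [Hi0|Hi0] := boolP (nat_of_ord p.2 == 0%N).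
  have [xe|xn0] := eqVneq (val p.1) 0.
    by exists [set p]; rewrite /sn_basic /= (negbTE Hi) Hi0; split=> //; left.
  exists ([set p] `|` [set q | 0 < val q.1 < val p.1]).
  rewrite /sn_basic /= (negbTE Hi) Hi0; split=> //; right; exists 0; split=> //.
  by rewrite lexx /= lt_neqAle eq_sym xn0 x0.
have [xe|xn1] := eqVneq (val p.1) 1.
  by exists [set p]; rewrite /sn_basic /= (negbTE Hi) (negbTE Hi0); split=> //; left.
exists ([set p] `|` [set q | val p.1 < val q.1 < 1]).
rewrite /sn_basic /= (negbTE Hi) (negbTE Hi0); split=> //; right; exists 1.
by split=> //; rewrite lexx andbT lt_neqAle xn1 x1.
Qed.

Lemma sn_openI : setI_closed sn_open.
Proof.
move=> U V oU oV p [Up Vp].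
have [B1 [b1 s1]] := oU p Up; have [B2 [b2 s2]] := oV p Vp.
have m1 := sn_basic_mem b1; have m2 := sn_basic_mem b2.
have Hp : forall B, sn_basic p B -> B `<=` B1 /\ B `<=` B2 ->
  exists B, sn_basic p B /\ B `<=` U `&` V.
  move=> B bB [h1 h2]; exists B; split=> // q Bq; split.
  - exact/s1/h1.
  - exact/s2/h2.
have [Hi|Hi] := boolP (1 < p.2)%N.
  move: b1 b2; rewrite [sn_basic p B1]/sn_basic [sn_basic p B2]/sn_basic Hi => e1 e2; subst B1 B2.
  by apply: (Hp [set p]); [rewrite /sn_basic /= Hi|split].
have [Hi0|Hi0] := boolP (nat_of_ord p.2 == 0%N).
  move: b1 b2; rewrite [sn_basic p B1]/sn_basic [sn_basic p B2]/sn_basic (negbTE Hi) Hi0.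
  move=> [[x0 e1]|[z1 [/andP[z10 z1x] e1]]].
    move=> _; apply: (Hp [set p]).
      by rewrite /sn_basic /= (negbTE Hi) Hi0; left.
    by subst B1; split=> q ->.
  move=> [[x0 e2]|[z2 [/andP[z20 z2x] e2]]].
    apply: (Hp [set p]); first by rewrite /sn_basic /= (negbTE Hi) Hi0; left.
    by subst B2; split=> q ->.
  apply: (Hp ([set p] `|` [set q | Num.max z1 z2 < val q.1 < val p.1])).
    rewrite /sn_basic /= (negbTE Hi) Hi0; right; exists (Num.max z1 z2).
    by rewrite gt_max z1x z2x le_max z10.
  subst B1 B2; split=> q [->|/andP[]]; rewrite ?gt_max;
    try (by left); by move=> /andP[a b] c; right; rewrite /= ?a ?b c.
move: b1 b2; rewrite [sn_basic p B1]/sn_basic [sn_basic p B2]/sn_basic (negbTE Hi) (negbTE Hi0).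
move=> [[x1 e1]|[z1 [/andP[z1x z11] e1]]].
  move=> _; apply: (Hp [set p]).
    by rewrite /sn_basic /= (negbTE Hi) (negbTE Hi0); left.
  by subst B1; split=> q ->.
move=> [[x1 e2]|[z2 [/andP[z2x z21] e2]]].
  apply: (Hp [set p]); first by rewrite /sn_basic /= (negbTE Hi) (negbTE Hi0); left.
  by subst B2; split=> q ->.
apply: (Hp ([set p] `|` [set q | val p.1 < val q.1 < Num.min z1 z2])).
  rewrite /sn_basic /= (negbTE Hi) (negbTE Hi0); right; exists (Num.min z1 z2).
  by rewrite lt_min z1x z2x ge_min z11.
subst B1 B2; split=> q [->|/andP[]]; rewrite ?lt_min;
  try (by left); by move=> c /andP[a b]; right; rewrite /= ?a ?b c.
Qed.

Lemma sn_open_bigU (I : Type) (f : I -> set (Sn R n)) :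
  (forall i, sn_open (f i)) -> sn_open (\bigcup_i f i).
Proof.
move=> hf p [i _ fip]; have [B [bB sB]] := hf i p fip.
by exists B; split=> // q /sB fiq; exists i.
Qed.

End SplitInterval.

HB.instance Definition _ (R : realType) (n : nat) :=
  isOpenTopological.Build (Sn R n) (@sn_openT R n) (@sn_openI R n)
    (@sn_open_bigU R n).

Definition baire_space : Type := prod_topology (fun _ : nat => nat).
HB.instance Definition _ := Pointed.on baire_space.
HB.instance Definition _ := Nbhs.on baire_space.
HB.instance Definition _ := Topological.on baire_space.

Definition ptws_fun (R : realType) : Type :=
  prod_topology (fun _ : baire_space => (R : topologicalType)).
HB.instance Definition _ (R : realType) := Nbhs.on (ptws_fun R).
HB.instance Definition _ (R : realType) := Topological.on (ptws_fun R).

Definition baire_one (R : realType) : set (ptws_fun R) :=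
  [set f | exists g : nat -> baire_space -> R,
      (forall k, continuous (g k)) /\
      (forall x : baire_space, (fun k => g k x) @ \oo --> f x)].

Arguments baire_one R : clear implicits.

Definition rosenthal_compactum (R : realType) (K : topologicalType) : Prop :=
  exists (e : K -> ptws_fun R) (e' : ptws_fun R -> K),
    [/\ continuous e, (forall x, e' (e x) = x),
        {within range e, continuous e'},
        compact (range e) & range e `<=` baire_one R].

Definition premetric_deg_le (R : realType) (K : topologicalType) (m : nat)
  : Prop :=
  exists (M : pseudoMetricType R) (f : K -> M),
    [/\ hausdorff_space M, compact [set: M], continuous f,
        (forall y : M, exists x, f x = y) &
        (forall y : M, (f @^-1` [set y] #<= [set: 'I_m])%card)].

(* S_n(I) is compact: by real induction along [0, 1], since fibres {x} x n are
   finite and every neighbourhood of (x, 0) (resp. (x, 1)) contains a whole strip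
   to the left (resp. right) of x.  The projection onto I is then a continuous
   surjection with fibres of size n.  Conversely, let f : S_n(I) -> M be continuous
   with M metric.  Left of y the values f(w, i) are close to f(y, 0), right of y
   to f(y, 1); hence for each e > 0 the y at which the values f(y, i) are e-apart
   form a discrete, thus countable, subset of ]0, 1[.  Some y lies in none of
   these sets for e = 2^-k, k in N; then f identifies the n points (y, i).
   Finally, let t : N^N -> [0, 1] read the digits [s_k != 0] of s as a binary
   expansion.  Mapping (x, i) to the function s |-> 1, i or 0 according as t(s) is
   below, equal to or above x embeds S_n(I) into B_1(N^N): the map is continuous
   because each coordinate is locally constant on S_n(I), and each coordinate is
   the pointwise limit of functions depending on finitely many digits of s. *)

From HB Require Import structures.
From mathcomp Require Import all_boot all_order all_algebra.
From mathcomp Require Import all_classical all_reals all_analysis.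
From mathcomp Require Import finmap ring lra.
Set Implicit Arguments. Unset Strict Implicit. Unset Printing Implicit Defensive.
Import Order.TTheory GRing.Theory Num.Theory.
Import numFieldTopology.Exports numFieldNormedType.Exports.
Local Open Scope classical_set_scope.
Local Open Scope ring_scope.

(* [compact_cover] is only stated for pointed spaces. *)
Definition pointed_at (T : topologicalType) (t : T) : Type := T.
HB.instance Definition _ (T : topologicalType) (t : T) :=
  Topological.on (pointed_at t).
HB.instance Definition _ (T : topologicalType) (t : T) :=
  isPointed.Build (pointed_at t) t.

Lemma compact_coverP (T : topologicalType) (A : set T) :
  compact A <-> cover_compact A.
Proof.
have [->|/set0P[t _]] := eqVneq A set0.
  by split=> _; [move=> I D f _ _; exists fset0%fset | exact: compact0].
suff : @compact (pointed_at t) A <-> @cover_compact (pointed_at t) A by [].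
by rewrite compact_cover.
Qed.

Lemma continuous_locally_constant (T U : topologicalType) (g : T -> U) :
  (forall x, nbhs x [set y | g y = g x]) -> continuous g.
Proof.
by move=> gc x V /= gV; apply: filterS (gc x) => y /= ->; exact: nbhs_singleton.
Qed.

Lemma continuous_prod_topology (X : topologicalType) (I : eqType)
    (K : I -> topologicalType) (g : X -> prod_topology K) :
  (forall i, continuous (fun x => g x i)) -> continuous g.
Proof.
move=> gi x; apply/cvg_sup => i.
exact: (@continuous_comp_initial _ X (K i) (fun h : (forall i, K i) => h i) g (gi i) x).
Qed.

Lemma continuous_inverse_compact (K Y : topologicalType) (e : K -> Y) (e' : Y -> K) :
  compact [set: K] -> hausdorff_space Y -> continuous e -> cancel e e' ->
  {within range e, continuous e'}.
Proof.
move=> K_compact Y_hausdorff e_cont eK; apply/continuous_closedP => C C_closed.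
apply/closed_subspaceP; exists (e @` C).
  apply: (compact_closed Y_hausdorff); apply: continuous_compact.
    exact: continuous_subspaceT.
  exact: (subclosed_compact C_closed K_compact).
apply/seteqP; split => y [Cy [x _ exy]].
  case: Cy => x' Cx' <-; split; last by exists x'.
  by rewrite /preimage /= /from_subspace eK.
split; last by exists x.
by exists x => //; move: Cy; rewrite /preimage /= /from_subspace -exy eK.
Qed.

Lemma itvoo01_uncountable (R : realType) : ~ countable (`]0, 1[%classic : set R).
Proof.
move=> /countable_lebesgue_measure0.
rewrite lebesgue_measure_itv /= lte_fin ltr01 oppr0 adde0 => /eqP.
by rewrite eqe oner_eq0.
Qed.

Lemma unit_itv0_subproof (R : realType) : 0 <= (0 : R) <= 1.
Proof. by rewrite lexx ler01. Qed.

Definition to_unit_itv (R : realType) (x : R) : unit_itv R :=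
  insubd (exist _ 0 (unit_itv0_subproof R)) x.

Lemma to_unit_itvK (R : realType) (x : R) : 0 <= x <= 1 -> val (to_unit_itv x) = x.
Proof. by move=> x01; rewrite insubdK. Qed.

Definition unit_interval (R : realType) :=
  initial_topology (fun x : unit_itv R => val x).

Section UnitInterval.
Variable R : realType.

Lemma unit_interval_hausdorff : hausdorff_space (unit_interval R).
Proof.
rewrite ball_hausdorff => a b ab.
have vab : val a != val b by apply: contra ab => /eqP/val_inj ->.
have d0 : 0 < `|val a - val b| / 2 by rewrite divr_gt0 // normr_gt0 subr_eq0.
exists (PosNum d0, PosNum d0); apply/eqP; rewrite -subset0 => y [].
rewrite /ball /= /initial_ball -!ball_normE /ball_ /= => ay yb.
have := ler_normD (val a - val y) (val y - val b).
by rewrite distrC in yb; rewrite [_ + _](_ : _ = val a - val b); [lra | ring].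
Qed.

Lemma unit_interval_compact : compact [set: unit_interval R].
Proof.
pose g (x : R) : unit_interval R := to_unit_itv x.
have -> : [set: unit_interval R] = g @` `[0, 1]%classic.
  apply/seteqP; split=> // y _; exists (val y).
    by rewrite /= in_itv /=; exact: (valP y).
  by rewrite /g /to_unit_itv valKd.
apply: continuous_compact; last exact: segment_compact.
apply: continuous_comp_initial; apply: (@subspace_eq_continuous _ _ _ incl_subspace).
  by move=> x /set_mem; rewrite /= in_itv /= => x01; rewrite to_unit_itvK.
exact: incl_subspace_continuous.
Qed.

End UnitInterval.

Section SplitIntervalTopology.
Variables (R : realType) (n : nat).
Local Notation S := (Sn R n).
Implicit Types (p q : S) (A B U : set S).

Definition left_strip_sub p A :=
  exists2 z : R, z < val p.1 & forall q, z < val q.1 < val p.1 -> A q.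

Definition right_strip_sub p A :=
  exists2 z : R, val p.1 < z & forall q, val p.1 < val q.1 < z -> A q.

Definition sn_nbhs p A := [/\ A p,
  nat_of_ord p.2 = 0%N -> 0 < val p.1 -> left_strip_sub p A &
  nat_of_ord p.2 = 1%N -> val p.1 < 1 -> right_strip_sub p A].

Lemma sn_nbhsS p A B : A `<=` B -> sn_nbhs p A -> sn_nbhs p B.
Proof.
move=> AB [Ap l r]; split=> [|i0 x0|i1 x1]; first exact: AB.
- by have [z zx zA] := l i0 x0; exists z => // q /zA/AB.
- by have [z xz zA] := r i1 x1; exists z => // q /zA/AB.
Qed.

Lemma sn_nbhs_strip p A a b : a < val p.1 < b ->
  [set q | a < val q.1 < b] `<=` A -> sn_nbhs p A.
Proof.
move=> /andP[ap pb] abA; split=> [|_ _|_ _]; first by apply: abA; rewrite /= ap.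
- by exists a => // q /andP[aq qp]; apply: abA; rewrite /= aq (lt_trans qp).
- by exists b => // q /andP[pq qb]; apply: abA; rewrite /= qb (lt_trans ap).
Qed.

Lemma sn_basicP p A : (exists B, sn_basic p B /\ B `<=` A) <-> sn_nbhs p A.
Proof.
have /andP[x0 x1] := valP p.1.
case: p x0 x1 => x [[|[|i]] ni] /= x0 x1; rewrite /sn_basic /sn_nbhs /=.
- split=> [[B [[[xe ->]|[z [/andP[_ zx] ->]]] BA]]|[Ap l _]].
  + by split=> // [|_]; [exact: BA | rewrite xe ltxx].
  + split=> // [|_ _]; first by apply: BA; left.
    by exists z => // q qz; apply: BA; right.
  have [xe|xn] := eqVneq (val x) 0.
    by exists [set (x, Ordinal ni)]; split; [left|move=> _ ->].
  have [z zx zA] : left_strip_sub (x, Ordinal ni) A by apply: l; rewrite // lt_def xn.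
  exists ([set (x, Ordinal ni)] `|` [set q | Num.max 0 z < val q.1 < val x]); split.
    by right; exists (Num.max 0 z); rewrite le_max lexx gt_max zx lt_def xn x0.
  move=> q [->//|/andP[]]; rewrite gt_max => /andP[_ zq] qx; apply: zA; exact/andP.
- split=> [[B [[[xe ->]|[z [/andP[xz _] ->]]] BA]]|[Ap _ r]].
  + by split=> // [|_]; [exact: BA | rewrite xe ltxx].
  + split=> // [|_ _]; first by apply: BA; left.
    by exists z => // q qz; apply: BA; right.
  have [xe|xn] := eqVneq (val x) 1.
    by exists [set (x, Ordinal ni)]; split; [left|move=> _ ->].
  have [z xz zA] : right_strip_sub (x, Ordinal ni) A by apply: r; rewrite // lt_neqAle xn.
  exists ([set (x, Ordinal ni)] `|` [set q | val x < val q.1 < Num.min 1 z]); split.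
    by right; exists (Num.min 1 z); rewrite ge_min lexx lt_min xz lt_neqAle xn x1.
  move=> q [->//|/andP[xq]]; rewrite lt_min => /andP[_ qz]; apply: zA; exact/andP.
- split=> [[B [-> BA]]|[Ap _ _]]; last by exists [set (x, Ordinal ni)]; split=> // _ ->.
  by split=> //; exact: BA.
Qed.

Lemma open_snP U : open U <-> forall p, U p -> sn_nbhs p U.
Proof.
rewrite (_ : open U = sn_open U) //.
by split=> oU p Up; apply/sn_basicP; exact: oU.
Qed.

Lemma open_sn_nbhs A : open [set p | sn_nbhs p A].
Proof.
apply/open_snP => p [Ap lA rA]; split=> [|i0 x0|i1 x1]; first by split.
- have [z zp zA] := lA i0 x0; exists z => // q zqp.
  by apply: sn_nbhs_strip zqp _ => r /zA.
- have [z pz zA] := rA i1 x1; exists z => // q pqz.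
  by apply: sn_nbhs_strip pqz _ => r /zA.
Qed.

Lemma nbhs_snP p A : nbhs p A <-> sn_nbhs p A.
Proof.
rewrite nbhsE; split=> [[U [oU Up] UA]|pA].
  exact: sn_nbhsS UA ((open_snP U).1 oU p Up).
exists [set q | sn_nbhs q A]; last by move=> q [].
by split=> //; exact: open_sn_nbhs.
Qed.

End SplitIntervalTopology.

Definition idx0 (n : nat) (n_gt1 : (1 < n)%N) : 'I_n := Ordinal (ltnW n_gt1).
Definition idx1 (n : nat) (n_gt1 : (1 < n)%N) : 'I_n := Ordinal n_gt1.

Section SplitIntervalCompact.
Variables (R : realType) (n : nat).
Hypothesis n_gt1 : (1 < n)%N.
Local Notation S := (Sn R n).

Lemma finite_fiber (c : R) : finite_set [set q : S | val q.1 = c].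
Proof.
have [->|/set0P[q0 q0c]] := eqVneq [set q : S | val q.1 = c] set0.
  exact: finite_set0.
apply: (sub_finite_set _ (finite_image (fun i => (q0.1, i)) (@finite_finset _ setT))).
move=> [y i] /= yc; exists i => //; congr pair; apply: val_inj; by rewrite /= yc q0c.
Qed.

Section Cover.
Variables (I : choiceType) (D : set I) (f : I -> set S).
Hypotheses (f_open : forall i, D i -> open (f i)) (f_cover : [set: S] `<=` cover D f).

Let cov A := finite_subset_cover D f A.
Let cov_upto s := cov [set q : S | val q.1 <= s].

Let covU A B : cov A -> cov B -> cov (A `|` B).
Proof.
move=> [D1 s1 c1] [D2 s2 c2]; exists (D1 `|` D2)%fset.
  by move=> j; rewrite inE => /orP[/s1|/s2].
by move=> q [/c1|/c2] [j /= jD fq]; exists j => //=; rewrite inE ?jD //= orbT.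
Qed.

Let covS A B : A `<=` B -> cov B -> cov A.
Proof. by move=> AB [D1 s1 c1]; exists D1 => //; exact: subset_trans c1. Qed.

Let cov_compact A : compact A -> cov A.
Proof.
by move=> /compact_coverP /(_ I D f f_open); apply => q _; exact: f_cover.
Qed.

Let cov_nbhs p : exists2 j, D j & sn_nbhs p (f j).
Proof.
have [j Dj fjp] := f_cover (Logic.I : setT p).
by exists j => //; apply/nbhs_snP; apply: open_nbhs_nbhs; split=> //; exact: f_open.
Qed.

Let cov_member j : D j -> cov (f j).
Proof.
move=> Dj; exists [fset j]%fset; first by move=> k /fset1P ->; exact/mem_set.
by move=> q fq; exists j => //=; rewrite inE.
Qed.

Let cov_fiber c : cov [set q : S | val q.1 = c].
Proof. exact/cov_compact/finite_compact/finite_fiber. Qed.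

Let cov_upto_left c : 0 < c <= 1 ->
  exists2 z, z < c & forall s, z < s -> cov_upto s -> cov_upto c.
Proof.
move=> /andP[c0 c1].
have [j Dj [_ + _]] := cov_nbhs (to_unit_itv c, idx0 n_gt1).
rewrite /left_strip_sub /= to_unit_itvK ?(ltW c0) ?c1 // => /(_ erefl c0) [z zc zf].
exists z => // s zs covs.
apply: covS (covU (covU covs (cov_member Dj)) (cov_fiber c)) => q /= qc.
have [qs|sq] := leP (val q.1) s; first by left; left.
have [qc'|] := ltP (val q.1) c; last by right; apply/eqP; rewrite eq_le qc.
by left; right; apply: zf; rewrite qc' (lt_trans zs sq).
Qed.

Let cov_upto_right c : 0 <= c < 1 -> cov_upto c ->
  exists2 z, c < z & forall s, s < z -> cov_upto s.
Proof.
move=> /andP[c0 c1] covc.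
have [j Dj [_ _ +]] := cov_nbhs (to_unit_itv c, idx1 n_gt1).
rewrite /right_strip_sub /= to_unit_itvK ?c0 ?(ltW c1) // => /(_ erefl c1) [z cz zf].
exists z => // s sz.
apply: covS (covU (covU covc (cov_member Dj)) (cov_fiber s)) => q /= qs.
have [qc|cq] := leP (val q.1) c; first by left; left.
have [qs'|] := ltP (val q.1) s; last by right; apply/eqP; rewrite eq_le qs.
by left; right; apply: zf; rewrite cq (lt_trans qs' sz).
Qed.

Lemma Sn_finite_subcover : cov [set: S].
Proof.
(* The supremum of the s for which [0, s] x n is finitely covered is 1. *)
pose D0 := [set s : R | s <= 1 /\ cov_upto s].
have D0_0 : D0 0.
  split=> //; apply: covS (cov_fiber 0) => q /= q0.
  by apply/eqP; rewrite eq_le q0; case/andP: (valP q.1).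
have supD0 : has_sup D0 by split; [exists 0 | exists 1 => s []].
set c := sup D0.
have c0 : 0 <= c by exact: sup_upper_bound.
have c1 : c <= 1 by apply: ge_sup => [|s []//]; exists 0.
have covc : cov_upto c.
  have [->|c_neq0] := eqVneq c 0; first exact: D0_0.2.
  have [|z zc zcov] := cov_upto_left (c := c).
    by rewrite lt_neqAle eq_sym c_neq0 c0 c1.
  have [s [_ covs] zs] := sup_adherent (eps := c - z) (ltac:(by rewrite subr_gt0)) supD0.
  by apply: zcov covs; move: zs; rewrite -/c; lra.
have c_eq1 : c = 1.
  apply/eqP; rewrite eq_le c1 leNgt; apply/negP => c_lt1.
  have [z cz zcov] := cov_upto_right (c := c) (ltac:(by rewrite c0)) covc.
  pose m := Num.min z 1.
  have mz : m <= z by rewrite ge_min lexx.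
  have m1 : m <= 1 by rewrite ge_min lexx orbT.
  have cm : c < m by rewrite lt_min cz c_lt1.
  have : (c + m) / 2 <= c.
    by apply: sup_upper_bound => //; split; [|apply: zcov]; lra.
  lra.
by apply: covS covc => q _; rewrite c_eq1; case/andP: (valP q.1).
Qed.

End Cover.
End SplitIntervalCompact.

Lemma Sn_compact (R : realType) (n : nat) : (1 < n)%N -> compact [set: Sn R n].
Proof.
move=> n_gt1; apply/compact_coverP => I D f f_open f_cover.
exact: Sn_finite_subcover.
Qed.

Section SplitIntervalProjection.
Variables (R : realType) (n : nat).
Local Notation S := (Sn R n).

Lemma continuous_Sn_fst : continuous (fun p : S => p.1 : unit_interval R).
Proof.
apply: continuous_comp_initial => p V /= /nbhs_ballP[e e0 eV]; apply/nbhs_snP.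
apply: (@sn_nbhsS _ _ _ [set q | val p.1 - e < val q.1 < val p.1 + e]).
  by move=> q pq; apply: eV; rewrite -ball_normE /ball_ /= ltr_distlC.
apply: (sn_nbhs_strip (a := val p.1 - e) (b := val p.1 + e)) => //.
by move: e0 => /= e0; lra.
Qed.

Lemma Sn_premetric_deg_le : (1 < n)%N -> premetric_deg_le R S n.
Proof.
move=> n_gt1; exists (unit_interval R), (fun p : S => p.1 : unit_interval R); split.
- exact: unit_interval_hausdorff.
- exact: unit_interval_compact.
- exact: continuous_Sn_fst.
- by move=> y; exists (y, idx1 n_gt1).
- move=> y; apply: card_le_trans (card_image_le (fun i : 'I_n => ((y, i) : S)) setT).
  by apply: subset_card_le => -[a b] /= ay; exists b => //; rewrite ay.
Qed.

End SplitIntervalProjection.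

Section DyadicExpansion.
Variable R : realType.
Implicit Types (s : nat -> nat) (k m : nat).

Definition dyad k : R := (2 ^+ k)^-1.

Definition digit m : R := (m != 0%N)%:R.

Fixpoint dyadic_sum s k : R :=
  if k is k'.+1 then dyadic_sum s k' + digit (s k') * dyad k'.+1 else 0.

Definition dyadic_value s : R := sup (range (dyadic_sum s)).

Lemma dyad_gt0 k : 0 < dyad k.
Proof. by rewrite invr_gt0 exprn_gt0. Qed.

Lemma dyad0 : dyad 0 = 1.
Proof. by rewrite /dyad expr0 invr1. Qed.

Lemma dyadS k : dyad k.+1 + dyad k.+1 = dyad k.
Proof.
have h : (2 ^+ k : R) != 0 by rewrite expf_neq0 // pnatr_eq0.
by rewrite /dyad exprS; field.
Qed.

Lemma digit01 m : 0 <= digit m <= 1.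
Proof. by rewrite /digit; case: (m != 0%N); rewrite /= ?lexx ?ler01. Qed.

Lemma dyad_nonincreasing : nonincreasing_seq dyad.
Proof. by apply/nonincreasing_seqP => k; rewrite -[leRHS]dyadS lerDl ltW ?dyad_gt0. Qed.

Lemma dyad_lt e : 0 < e -> exists k, dyad k < e.
Proof.
move=> e0; exists (Num.truncn e^-1); set k := Num.truncn e^-1.
have ek : e^-1 < k.+1%:R := truncnS_gt e^-1.
rewrite /dyad -[ltRHS]invrK ltf_pV2 ?posrE ?invr_gt0 ?exprn_gt0 //.
by apply: (lt_le_trans ek); rewrite -natrX ler_nat ltn_expl.
Qed.

Lemma near_dyad_lt e : 0 < e -> \forall k \near \oo, dyad k < e.
Proof.
move=> /dyad_lt[k0 k0e]; exists k0 => // k /= k0k.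
exact: le_lt_trans (dyad_nonincreasing k0k) k0e.
Qed.

Lemma dyadic_sum_nondecreasing s : nondecreasing_seq (dyadic_sum s).
Proof.
apply/nondecreasing_seqP => k /=; rewrite lerDl.
by apply: mulr_ge0; [case/andP: (digit01 (s k)) | exact/ltW/dyad_gt0].
Qed.

Lemma dyadic_sum_dyad_nonincreasing s :
  nonincreasing_seq (fun k => dyadic_sum s k + dyad k).
Proof.
apply/nonincreasing_seqP => k /=; rewrite -[dyad k](dyadS k) -addrA lerD2l lerD2r.
by rewrite ler_piMl ?(ltW (dyad_gt0 _)) //; case/andP: (digit01 (s k)).
Qed.

Lemma dyadic_sum_le s k k' : dyadic_sum s k' <= dyadic_sum s k + dyad k.
Proof.
have [kk'|k'k] := leqP k k'.
  apply: le_trans (dyadic_sum_dyad_nonincreasing s kk').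
  by rewrite lerDl ltW ?dyad_gt0.
apply: le_trans (dyadic_sum_nondecreasing s (ltnW k'k)) _.
by rewrite lerDl ltW ?dyad_gt0.
Qed.

Lemma has_sup_dyadic_sum s : has_sup (range (dyadic_sum s)).
Proof.
split; first by exists 0, 0%N.
by exists 1 => _ [k _ <-]; have := dyadic_sum_le s 0 k; rewrite dyad0 /= add0r.
Qed.

Lemma dyadic_sum_le_value s k : dyadic_sum s k <= dyadic_value s.
Proof. by apply: sup_upper_bound; [exact: has_sup_dyadic_sum | exists k]. Qed.

Lemma dyadic_value_le s k : dyadic_value s <= dyadic_sum s k + dyad k.
Proof.
apply: ge_sup => [|_ [m _ <-]]; first by exists 0, 0%N.
exact: dyadic_sum_le.
Qed.

Fixpoint greedy_sum (x : R) k : R :=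
  if k is k'.+1 then
    let g := greedy_sum x k' in if g + dyad k <= x then g + dyad k else g
  else 0.

Definition greedy_digits (x : R) k : nat :=
  nat_of_bool (greedy_sum x k + dyad k.+1 <= x).

Lemma dyadic_sum_greedy x k : dyadic_sum (greedy_digits x) k = greedy_sum x k.
Proof.
elim: k => [|k IH] //=; rewrite IH /greedy_digits /digit.
by case: ifP; rewrite /= ?mul1r ?mul0r ?addr0.
Qed.

Lemma greedy_sum_bounds x k : 0 <= x <= 1 ->
  greedy_sum x k <= x <= greedy_sum x k + dyad k.
Proof.
move=> /andP[x0 x1]; elim: k => [|k IH] /=; first by rewrite dyad0 add0r x0 x1.
move: IH => /andP[gx xg]; have := dyadS k.
by case: ifP => gdx dk; apply/andP; split; lra.
Qed.

Lemma dyadic_value_greedy x : 0 <= x <= 1 -> dyadic_value (greedy_digits x) = x.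
Proof.
move=> x01; apply/eqP; rewrite eq_le; apply/andP.
split; apply/ler_addgt0Pr => e /dyad_lt[k ke].
- have /andP[gx _] := greedy_sum_bounds k x01.
  by have := dyadic_value_le (greedy_digits x) k; rewrite dyadic_sum_greedy; lra.
- have /andP[_ xg] := greedy_sum_bounds k x01.
  by have := dyadic_sum_le_value (greedy_digits x) k; rewrite dyadic_sum_greedy; lra.
Qed.

End DyadicExpansion.

Section SplitIntervalFibers.
Variables (R : realType) (n : nat) (M : pseudoMetricType R) (f : Sn R n -> M).
Hypotheses (n_gt1 : (1 < n)%N) (f_cont : continuous f).

Let P (y : R) (i : 'I_n) := f (to_unit_itv y, i).

Lemma fibers_close_punctured y e : 0 < y < 1 -> 0 < e ->
  exists a b, a < y < b /\ forall w, a < w < b -> w != y ->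
    exists c, forall i, ball c e (P w i).
Proof.
move=> /andP[y0 y1] e0; have y01 : 0 <= y <= 1 by rewrite !ltW.
have f_near (i : 'I_n) : nbhs ((to_unit_itv y, i) : Sn R n) (f @^-1` ball (P y i) e).
  by apply: f_cont; exact: nbhsx_ballx.
have /nbhs_snP[_ + _] := f_near (idx0 n_gt1).
rewrite /left_strip_sub /= to_unit_itvK // => /(_ erefl y0) [a ay aP].
have /nbhs_snP[_ _ +] := f_near (idx1 n_gt1).
rewrite /right_strip_sub /= to_unit_itvK // => /(_ erefl y1) [b yb bP].
exists (Num.max 0 a), (Num.min 1 b); split; first by rewrite gt_max lt_min y0 y1 ay yb.
move=> w /andP[]; rewrite gt_max lt_min => /andP[w0 aw] /andP[w1 wb].
have w01 : 0 <= w <= 1 by rewrite !ltW.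
case: ltgtP => // [wy|yw] _.
- exists (P y (idx0 n_gt1)) => i; apply: (aP (to_unit_itv w, i)).
  by rewrite /= to_unit_itvK ?aw.
- exists (P y (idx1 n_gt1)) => i; apply: (bP (to_unit_itv w, i)).
  by rewrite /= to_unit_itvK ?yw.
Qed.

Let E (e : R) := [set y : R | 0 < y < 1 /\ exists i j, ~ ball (P y i) e (P y j)].

Lemma spread_fibers_isolated e : 0 < e -> E e `<=` isolated (E e).
Proof.
move=> e0 y Ey; have [/andP[y0 y1] _] := Ey.
have [a [b [/andP[ay yb] close]]] :=
  fibers_close_punctured (y := y) (ltac:(by rewrite y0 y1))
    (ltac:(by rewrite divr_gt0) : 0 < e / 2).
split; first exact/mem_set.
exists `]a, b[%classic.
  by apply: open_nbhs_nbhs; split; [exact: itv_open | rewrite /= in_itv /= ay yb].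
apply/seteqP; split=> [w []|w ->]; last by split=> //; rewrite /= in_itv /= ay yb.
rewrite /= in_itv /= => awb [_ [i [j nb]]]; apply: contrapT => wy; apply: nb.
have [c cP] := close w awb (introN eqP wy).
by rewrite (splitr e); apply: ball_triangle (ball_sym (cP i)) (cP j).
Qed.

Lemma collapsed_fiber : hausdorff_space M ->
  exists y, 0 < y < 1 /\ forall i j, P y i = P y j.
Proof.
move=> hM.
pose spread := \bigcup_(k in [set: nat]) E (dyad R k).
have spread_countable : countable spread.
  apply: bigcup_countable => [|k _]; first exact: countableP.
  apply: card_le_trans (subset_card_le (spread_fibers_isolated (dyad_gt0 R k))) _.
  exact: countable_isolated.
have [y [y01 y_spread]] : exists y, `]0, 1[%classic y /\ ~ spread y.
  apply: contrapT => all_spread; apply: (@itvoo01_uncountable R).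
  apply: card_le_trans (subset_card_le _) spread_countable => y y01.
  by apply: contrapT => ny; apply: all_spread; exists y.
move: y01; rewrite /= in_itv /= => /andP[y0 y1]; exists y; split; first by rewrite y0.
move=> i j; apply: (close_eq hM); rewrite ball_close => eps.
have [k k_eps] := dyad_lt (gt0 eps).
apply: (le_ball (ltW k_eps)); apply: contrapT => ij; apply: y_spread.
by exists k => //; split; [rewrite y0 | exists i, j].
Qed.

End SplitIntervalFibers.

Lemma Sn_not_premetric_deg_le_pred (R : realType) (n : nat) : (1 < n)%N ->
  ~ premetric_deg_le R (Sn R n) n.-1.
Proof.
move=> n_gt1 [M [f [hM _ f_cont _ fib]]].
have [y [_ Py]] := collapsed_fiber n_gt1 f_cont hM.
pose p0 : Sn R n := (to_unit_itv y, idx0 n_gt1).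
have /card_leP[g] := fib (f p0).
pose h (i : 'I_n) : 'I_n.-1 :=
  val (g (SigSub (mem_set
    (Py i (idx0 n_gt1) : (f @^-1` [set f p0]) (to_unit_itv y, i))))).
have h_inj : injective h.
  by move=> i j /val_inj /(@injT _ _ g) /(congr1 val) /(congr1 snd).
have := leq_card h h_inj; rewrite !card_ord leqNgt.
by rewrite ltn_predL (ltnW n_gt1).
Qed.

Section SplitIntervalEmbedding.
Variables (R : realType) (n : nat).
Local Notation S := (Sn R n).

Definition split_step (t : R) (p : S) : R :=
  if t < val p.1 then 1 else if val p.1 < t then 0 else (nat_of_ord p.2)%:R.

Lemma continuous_split_step t : continuous (split_step t).
Proof.
apply: continuous_locally_constant => p; apply/nbhs_snP.
have [tp|pt|tp] := ltgtP t (val p.1).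
- apply: (sn_nbhs_strip (a := t) (b := val p.1 + 1)); first by rewrite tp ltrDl ltr01.
  by move=> q /andP[tq _]; rewrite /= /split_step tq tp.
- apply: (sn_nbhs_strip (a := val p.1 - 1) (b := t)); first by rewrite pt gtrDl ltrN10.
  move=> q /andP[_ qt]; rewrite /= /split_step.
  by rewrite ltNge (ltW qt) /= qt ltNge (ltW pt) /= pt.
- split=> [//|i0 _|i1 _].
  + exists (val p.1 - 1) => [|q /andP[_ qp]]; first by rewrite gtrDl ltrN10.
    by rewrite /= /split_step tp ltNge (ltW qp) /= qp ltxx i0.
  + exists (val p.1 + 1) => [|q /andP[pq _]]; first by rewrite ltrDl ltr01.
    by rewrite /= /split_step tp pq ltxx i1.
Qed.

(* For t := dyadic_sum s k this only depends on the first k digits of s, and it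
   converges to split_step (dyadic_value s) p as k grows. *)
Definition split_step_approx (k : nat) (t : R) (p : S) : R :=
  if t + dyad R k < val p.1 then 1 else if val p.1 < t then 0 else (nat_of_ord p.2)%:R.

Definition sn_embed (p : S) : ptws_fun R :=
  fun s : baire_space => split_step (dyadic_value R s) p.

Lemma nbhs_prefix (s : baire_space) k :
  nbhs s [set t : baire_space | forall j, (j < k)%N -> t j = s j].
Proof.
elim: k => [|k IH]; first by apply: filterS filterT => t _ j; rewrite ltn0.
have sk : nbhs s [set t : baire_space | t k = s k].
  by apply: (@proj_continuous nat (fun _ : nat => nat) k s [set s k]).
apply: filterS (filterI IH sk) => t [ts tk] j; rewrite ltnS leq_eqVlt.
by case/orP => [/eqP ->|/ts].
Qed.

Lemma dyadic_sum_prefix (s t : nat -> nat) k :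
  (forall j, (j < k)%N -> t j = s j) -> dyadic_sum R t k = dyadic_sum R s k.
Proof.
elim: k => [//|k IH] ts /=; rewrite IH ?ts // => j jk.
exact/ts/ltnW.
Qed.

Lemma sn_embed_baire_one p : baire_one R (sn_embed p).
Proof.
exists (fun k (s : baire_space) => split_step_approx k (dyadic_sum R s k) p); split.
  move=> k s V /= sV; apply: filterS (nbhs_prefix s k) => t ts.
  by rewrite /= (dyadic_sum_prefix ts); exact: nbhs_singleton.
move=> s; apply: cvg_near_cst; rewrite /sn_embed /split_step /split_step_approx.
set v := dyadic_value R s; set x := val p.1.
have lo k : dyadic_sum R s k <= v by exact: dyadic_sum_le_value.
have hi k : v <= dyadic_sum R s k + dyad R k by exact: dyadic_value_le.
have [vx|xv|vx] := ltgtP v x.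
- have := near_dyad_lt (ltac:(by rewrite subr_gt0) : 0 < x - v).
  apply: filterS => k dk; have := lo k => sv.
  by rewrite ifT //; lra.
- have := near_dyad_lt (ltac:(by rewrite subr_gt0) : 0 < v - x).
  apply: filterS => k dk; have := hi k => vs.
  have -> : (dyadic_sum R s k + dyad R k < x) = false.
    by apply/negbTE; rewrite -leNgt; lra.
  by rewrite ifT //; lra.
- apply: nearW => k; have := lo k => sv; have := hi k => vs.
  have -> : (dyadic_sum R s k + dyad R k < x) = false.
    by apply/negbTE; rewrite -leNgt; lra.
  by have -> : (x < dyadic_sum R s k) = false by apply/negbTE; rewrite -leNgt; lra.
Qed.

Lemma sn_embed_inj : injective sn_embed.
Proof.
move=> p q epq.
have {epq}step_eq t : 0 <= t <= 1 -> split_step t p = split_step t q.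
  move=> t01; rewrite -(@dyadic_value_greedy R t t01).
  exact: (congr1 (fun g => g _) epq).
wlog pq : p q step_eq / val p.1 <= val q.1.
  move=> wl; have [|/ltW] := leP (val p.1) (val q.1); first exact: wl.
  by move=> qp; apply/esym/wl => // t /step_eq.
have /andP[x0 x1] := valP p.1; have /andP[y0 y1] := valP q.1.
have [xy|xy] := eqVneq (val p.1) (val q.1).
  have := step_eq _ (valP p.1); rewrite /split_step -xy ltxx => /eqP.
  rewrite eqr_nat => /eqP ij.
  move: p q xy ij {step_eq pq x0 x1 y0 y1} => [a i] [b j] /= ab ij.
  by congr pair; exact: val_inj.
have xy' : val p.1 < val q.1 by rewrite lt_neqAle xy.
have := step_eq ((val p.1 + val q.1) / 2) (ltac:(apply/andP; split; lra)).
rewrite /split_step ifF; last by apply/negbTE; rewrite -leNgt; lra.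
by rewrite ifT ?ifT //; [move=> /eqP; rewrite eq_sym oner_eq0 | lra | lra].
Qed.

End SplitIntervalEmbedding.

Lemma Sn_rosenthal_compactum (R : realType) (n : nat) : (1 < n)%N ->
  rosenthal_compactum R (Sn R n).
Proof.
move=> n_gt1; pose p0 : Sn R n := (to_unit_itv 0, idx0 n_gt1).
pose e' (g : ptws_fun R) : Sn R n := xget p0 [set p | sn_embed p = g].
have e'K : cancel (@sn_embed R n) e'.
  move=> p; apply: (@sn_embed_inj R n).
  exact: (@xgetPex _ p0 [set q | sn_embed q = sn_embed p] (ex_intro _ p erefl)).
have embed_cont : continuous (@sn_embed R n).
  by apply: continuous_prod_topology => s; exact: continuous_split_step.
exists (@sn_embed R n), e'; split => //.
- apply: continuous_inverse_compact e'K => //; first exact: Sn_compact.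
  by apply: hausdorff_product => _; exact: Rhausdorff.
- by apply: continuous_compact; [exact: continuous_subspaceT | exact: Sn_compact].
- by move=> _ [p _ <-]; exact: sn_embed_baire_one.
Qed.

Theorem mainTheorem6 (R : realType) (n : nat) : (2 <= n)%N ->
  [/\ rosenthal_compactum R (Sn R n),
      premetric_deg_le R (Sn R n) n &
      ~ premetric_deg_le R (Sn R n) n.-1].
Proof.
move=> n_gt1; split.
- exact: Sn_rosenthal_compactum.
- exact: Sn_premetric_deg_le.
- exact: Sn_not_premetric_deg_le_pred.
Qed.
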